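(* Let $\alpha$ be irrational whose continued fraction partial quotients are bounded in average. Then the Sós permutations $\beta_\alpha$ of $[n]$ satisfy $D(\beta_\alpha)=O(\log n)$ as $n\to\infty$ (implicit constant depending on $\alpha$).
   Context: $[n]=\{1,\dots,n\}$, identified with $\mathbb{Z}_n$; $\{x\}$ is the fractional part of $x$. For irrational $\alpha$, $\beta_\alpha$ is the permutation of $[n]$ with $\beta_\alpha(t)=|\{s\in[n]:\{\alpha s\}\le\{\alpha t\}\}|$. If $\alpha=[a_0;a_1,a_2,\dots]$, its partial quotients are bounded in average if there is $B$ with $a_1+\dots+a_m\le Bm$ for all $m\ge1$. An interval of $\mathbb{Z}_n$ is any subset that is the image of an interval of consecutive integers under the projection $\mathbb{Z}\to\mathbb{Z}_n$ (wrap-around allowed). For $S,T\subseteq\mathbb{Z}_n$, $D_T(S)=\bigl|\,|S\cap T|-|S||T|/n\,\bigr|$, and $D(\sigma)=\max_{I,J}D_J(\sigma(I))$ over all intervals $I,J$. *)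

From Stdlib Require Import Reals List Arith Bool.
Import ListNotations.
Open Scope R_scope.

(** Fractional part {x} = x - floor x  (Stdlib: frac_part x = x - IZR (Int_part x),
    and Int_part is the floor). *)
Definition frac (x : R) : R := frac_part x.

Definition irrational (x : R) : Prop :=
  forall p q : Z, q <> 0%Z -> x <> IZR p / IZR q.

(** Complete quotients of the continued fraction: x_0 = alpha,
    x_{k+1} = 1 / {x_k}; partial quotients a_k = floor x_k,
    so alpha = [a_0; a_1, a_2, ...]. *)
Fixpoint cf_rem (alpha : R) (k : nat) : R :=
  match k with
  | O => alpha
  | S k' => / frac (cf_rem alpha k')
  end.

Definition partial_quotient (alpha : R) (k : nat) : Z := Int_part (cf_rem alpha k).

Definition pq_bounded_in_average (alpha : R) : Prop :=
  exists B : R, forall m : nat, (1 <= m)%nat ->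
    fold_right Rplus 0 (map (fun k => IZR (partial_quotient alpha k)) (seq 1 m))
      <= B * INR m.

Definition cardn (n : nat) (P : nat -> bool) : nat := length (filter P (seq 1 n)).

Definition sos_perm (alpha : R) (n : nat) (t : nat) : nat :=
  cardn n (fun s => if Rle_dec (frac (alpha * INR s)) (frac (alpha * INR t))
                    then true else false).

(** Intervals of Z_n, viewed as subsets of [n] (t in [n] identified with t mod n):
    the image of the integer interval {a, a+1, ..., a+l-1} under Z -> Z_n.
    Since residues only matter, starting points a may be taken in nat. *)
Definition in_interval (n a l : nat) (t : nat) : bool :=
  existsb (fun i => Nat.eqb ((a + i) mod n) (t mod n)) (seq 0 l).

Definition in_image (n : nat) (sigma : nat -> nat) (a l : nat) (t : nat) : bool :=
  existsb (fun s => in_interval n a l s && Nat.eqb (sigma s) t) (seq 1 n).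

Definition discr (n : nat) (S T : nat -> bool) : R :=
  Rabs (INR (cardn n (fun t => S t && T t))
        - INR (cardn n S) * INR (cardn n T) / INR n).

(** D(sigma) <= c  iff  D_J(sigma(I)) <= c for all intervals I, J
    (D(sigma) is the maximum of these finitely many values). *)
Definition disc_le (n : nat) (sigma : nat -> nat) (c : R) : Prop :=
  forall a l b m : nat,
    discr n (in_image n sigma a l) (in_interval n b m) <= c.

(* The discrepancy D_J(beta(I)) is bilinear in the indicators of I and J, and
   every interval of Z_n is a signed sum of at most three prefixes [1..k], so it
   suffices to compare prefixes.  The preimage under beta of a prefix is a set
   { s : {alpha s} < y }, and counting its elements among 1..k amounts to
   bounding the remainder of the floor sum  sum_{j<k} floor(c + j alpha) - k c
   uniformly in c.  Writing k in the Ostrowski numeration system of the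
   convergent denominators q_i, each block of length q_i contributes O(1)
   (Hermite's identity, since j p_i mod q_i runs through all residues), so the
   remainder is O(a_1 + ... + a_m) with q_m > n.  As q_m grows exponentially,
   m = O(log n), and bounded average partial quotients give O(log n). *)

From Stdlib Require Import Reals List Arith ZArith Lia Lra Permutation Bool.
Open Scope R_scope.

Lemma Int_part_bounds x : IZR (Int_part x) <= x < IZR (Int_part x) + 1.
Proof. destruct (base_Int_part x); lra. Qed.

Lemma Int_part_plus_IZR x z : Int_part (x + IZR z) = (Int_part x + z)%Z.
Proof. symmetry. apply Int_part_spec. rewrite plus_IZR. pose proof (Int_part_bounds x). lra. Qed.

Lemma Int_part_le_compat x y : x <= y -> (Int_part x <= Int_part y)%Z.
Proof.
  intros Hxy. destruct (Z_le_gt_dec (Int_part x) (Int_part y)) as [|Hgt]; auto.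
  assert (Hz : IZR (Int_part y + 1) <= IZR (Int_part x)) by (apply IZR_le; lia).
  rewrite plus_IZR in Hz. pose proof (Int_part_bounds x). pose proof (Int_part_bounds y). lra.
Qed.

Lemma frac_bounds x : 0 <= frac x < 1.
Proof. unfold frac, frac_part. pose proof (Int_part_bounds x). lra. Qed.

Lemma Rabs_le_inv x e : Rabs x <= e -> - e <= x <= e.
Proof.
  intros H. pose proof (Rle_abs x). pose proof (Rle_abs (- x)). rewrite Rabs_Ropp in *. lra.
Qed.

Definition sumR {A} (l : list A) (f : A -> R) : R :=
  fold_right (fun x acc => f x + acc) 0 l.

Section ListSums.
Context {A : Type}.
Implicit Types (l : list A) (f g : A -> R).

Lemma sumR_app l1 l2 f : sumR (l1 ++ l2) f = sumR l1 f + sumR l2 f.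
Proof. induction l1; simpl; [lra|]. rewrite IHl1. lra. Qed.

Lemma sumR_ext l f g : (forall x, In x l -> f x = g x) -> sumR l f = sumR l g.
Proof. induction l; simpl; intros H; auto. rewrite H, IHl; auto. Qed.

Lemma sumR_plus l f g : sumR l (fun x => f x + g x) = sumR l f + sumR l g.
Proof. induction l; simpl; [lra|]. rewrite IHl. lra. Qed.

Lemma sumR_minus l f g : sumR l (fun x => f x - g x) = sumR l f - sumR l g.
Proof. induction l; simpl; [lra|]. rewrite IHl. lra. Qed.

Lemma sumR_const l c : sumR l (fun _ => c) = INR (length l) * c.
Proof. induction l; simpl length; [simpl; lra|]. rewrite S_INR. simpl. rewrite IHl. lra. Qed.

Lemma sumR_le l f g : (forall x, In x l -> f x <= g x) -> sumR l f <= sumR l g.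
Proof.
  induction l as [|x l IH]; simpl; intros H; [lra|].
  pose proof (H x (or_introl eq_refl)). assert (sumR l f <= sumR l g) by auto. lra.
Qed.

Lemma sumR_perm l l' f : Permutation l l' -> sumR l f = sumR l' f.
Proof. induction 1; simpl; [lra | rewrite IHPermutation; lra | lra | congruence]. Qed.

End ListSums.

Lemma sumR_map {A B} (l : list A) (g : A -> B) f : sumR (map g l) f = sumR l (fun x => f (g x)).
Proof. induction l; simpl; auto. rewrite IHl; auto. Qed.

Lemma sumR_telescope (h : nat -> R) q : sumR (seq 0 q) (fun r => h (S r) - h r) = h q - h O.
Proof. induction q; [simpl; lra|]. rewrite seq_S, sumR_app, IHq. simpl. lra. Qed.

Lemma seq_shift_add a len : seq a len = map (Nat.add a) (seq 0 len).
Proof.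
  revert a. induction len; intros; simpl; auto. f_equal; [lia|].
  rewrite IHlen, <- seq_shift, map_map. apply map_ext. intros; lia.
Qed.

Lemma seq_split_at n k : (k <= n)%nat -> seq 1 n = seq 1 k ++ seq (1 + k) (n - k).
Proof. intros Hk. rewrite <- seq_app. f_equal. lia. Qed.

Definition b2R (b : bool) : R := if b then 1 else 0.

Lemma b2R_andb b1 b2 : b2R (b1 && b2) = b2R b1 * b2R b2.
Proof. destruct b1, b2; unfold b2R; simpl; ring. Qed.

Lemma cardn_sumR n P : INR (cardn n P) = sumR (seq 1 n) (fun t => b2R (P t)).
Proof.
  unfold cardn. induction (seq 1 n) as [|a l IH]; simpl; auto.
  destruct (P a); cbn [length]; [rewrite S_INR|]; rewrite IH; simpl b2R; lra.
Qed.

Definition cf_frac (alpha : R) (k : nat) : R := frac (cf_rem alpha k).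

(* Shifted indices: [cf_q alpha (S k)] and [cf_p alpha (S k)] are the usual
   convergent denominators and numerators q_k, p_k, with q_{-1} = 0, p_{-1} = 1
   at index 0; [cf_theta alpha k] = |q_{k-1} alpha - p_{k-1}|. *)
Fixpoint cf_q (alpha : R) (i : nat) : Z :=
  match i with
  | O => 0
  | S O => 1
  | S ((S j) as k) => partial_quotient alpha k * cf_q alpha k + cf_q alpha j
  end.

Fixpoint cf_p (alpha : R) (i : nat) : Z :=
  match i with
  | O => 1
  | S O => partial_quotient alpha 0
  | S ((S j) as k) => partial_quotient alpha k * cf_p alpha k + cf_p alpha j
  end.

Fixpoint cf_theta (alpha : R) (i : nat) : R :=
  match i with
  | O => 1
  | S j => cf_theta alpha j * cf_frac alpha j
  end.

Section ContinuedFraction.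
Variable alpha : R.

Local Notation a := (partial_quotient alpha).
Local Notation q := (cf_q alpha).
Local Notation p := (cf_p alpha).
Local Notation theta := (cf_theta alpha).

Definition cf_error_identity (i : nat) : Prop :=
  IZR (q i) * alpha - IZR (p i) = (-1) ^ (S i) * theta i.

Lemma cf_frac_eq k : cf_frac alpha k = cf_rem alpha k - IZR (a k).
Proof. reflexivity. Qed.

Lemma cf_frac_bounds k : 0 <= cf_frac alpha k < 1.
Proof. apply frac_bounds. Qed.

Lemma cf_rem_S k : cf_rem alpha (S k) = / cf_frac alpha k.
Proof. reflexivity. Qed.

Lemma partial_quotient_ge1 k : cf_frac alpha k <> 0 -> (1 <= a (S k))%Z.
Proof.
  intros Hk. pose proof (cf_frac_bounds k).
  assert (Hgt : 1 < cf_rem alpha (S k)).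
  { rewrite cf_rem_S, <- Rinv_1. apply Rinv_lt_contravar; lra. }
  pose proof (Int_part_bounds (cf_rem alpha (S k))).
  assert (Hpos : 0 < IZR (a (S k))) by (unfold partial_quotient; lra).
  apply lt_IZR in Hpos. lia.
Qed.

Lemma cf_error_identity_pair i : (forall j, (j < i)%nat -> cf_frac alpha j <> 0) ->
  cf_error_identity i /\ cf_error_identity (S i).
Proof.
  induction i as [|i IH]; intros Hfr.
  - unfold cf_error_identity; simpl. split; [lra|].
    unfold cf_frac, frac, frac_part, partial_quotient. simpl. lra.
  - destruct IH as [Hi HSi]; [intros; apply Hfr; lia|].
    split; auto. unfold cf_error_identity in *.
    assert (Hfi : cf_frac alpha i <> 0) by (apply Hfr; lia).
    change (q (S (S i))) with (a (S i) * q (S i) + q i)%Z.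
    change (p (S (S i))) with (a (S i) * p (S i) + p i)%Z.
    change (theta (S (S i))) with (theta i * cf_frac alpha i * cf_frac alpha (S i)).
    change (theta (S i)) with (theta i * cf_frac alpha i) in HSi.
    rewrite !plus_IZR, !mult_IZR, (cf_frac_eq (S i)), cf_rem_S.
    transitivity (IZR (a (S i)) * (IZR (q (S i)) * alpha - IZR (p (S i)))
                  + (IZR (q i) * alpha - IZR (p i))); [ring|].
    rewrite Hi, HSi. simpl pow. field. auto.
Qed.

Lemma cf_q_mono_pair i : (forall j, (j < i)%nat -> cf_frac alpha j <> 0) ->
  (0 <= q i <= q (S i))%Z /\ (1 <= q (S i))%Z.
Proof.
  induction i as [|i IH]; intros Hfr; [simpl; lia|].
  destruct IH as [Hi HSi]; [intros; apply Hfr; lia|].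
  assert (Ha : (1 <= a (S i))%Z) by (apply partial_quotient_ge1, Hfr; lia).
  change (q (S (S i))) with (a (S i) * q (S i) + q i)%Z. nia.
Qed.

(* If the expansion stopped at step k, alpha would be the convergent p_k / q_k. *)
Lemma irrational_cf_frac_neq0 : irrational alpha -> forall k, cf_frac alpha k <> 0.
Proof.
  intros Hirr k. induction k as [k IH] using (well_founded_induction lt_wf). intros Hk.
  destruct (cf_error_identity_pair k IH) as [_ Herr].
  destruct (cf_q_mono_pair k IH) as [_ Hq].
  unfold cf_error_identity in Herr. simpl cf_theta in Herr. rewrite Hk in Herr.
  apply (Hirr (p (S k)) (q (S k))); [lia|].
  assert (IZR (q (S k)) <> 0) by (apply not_0_IZR; lia).
  field_simplify_eq; auto. lra.
Qed.

Lemma cf_det i : (p (S i) * q i - p i * q (S i) = 1 \/ p (S i) * q i - p i * q (S i) = -1)%Z.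
Proof.
  induction i as [|i IH]; [simpl; lia|].
  change (q (S (S i))) with (a (S i) * q (S i) + q i)%Z.
  change (p (S (S i))) with (a (S i) * p (S i) + p i)%Z.
  assert ((a (S i) * p (S i) + p i) * q (S i) - p (S i) * (a (S i) * q (S i) + q i) =
          - (p (S i) * q i - p i * q (S i)))%Z by ring.
  lia.
Qed.

Lemma cf_q_coprime i j z : (0 < j < q (S i))%Z -> (j * p (S i))%Z <> (z * q (S i))%Z.
Proof.
  intros Hj Heq.
  assert (Hd : (q (S i) * (z * q i - j * p i) = j * (p (S i) * q i - p i * q (S i)))%Z).
  { transitivity (z * q (S i) * q i - j * p i * q (S i))%Z; [ring|]. rewrite <- Heq. ring. }
  set (w := (z * q i - j * p i)%Z) in Hd.
  destruct (cf_det i) as [Hdet|Hdet]; rewrite Hdet in Hd;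
    destruct (Z.lt_total w 0) as [|[|]]; nia.
Qed.

Hypothesis cf_frac_nz : forall k, cf_frac alpha k <> 0.

Lemma cf_error_identity_holds i : cf_error_identity i.
Proof. apply (cf_error_identity_pair i). auto. Qed.

Lemma cf_q_mono i : (0 <= q i <= q (S i))%Z /\ (1 <= q (S i))%Z.
Proof. apply cf_q_mono_pair. auto. Qed.

Lemma cf_theta_pos i : 0 < theta i.
Proof.
  induction i; simpl; [lra|].
  pose proof (cf_frac_bounds i). pose proof (cf_frac_nz i).
  apply Rmult_lt_0_compat; lra.
Qed.

Lemma cf_theta_rec i : theta (S (S i)) = theta i - IZR (a (S i)) * theta (S i).
Proof.
  change (theta (S (S i))) with (theta i * cf_frac alpha i * cf_frac alpha (S i)).
  change (theta (S i)) with (theta i * cf_frac alpha i).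
  rewrite (cf_frac_eq (S i)), cf_rem_S. field. apply cf_frac_nz.
Qed.

Lemma cf_q_theta_cross i : IZR (q (S i)) * theta i + IZR (q i) * theta (S i) = 1.
Proof.
  induction i as [|i IH]; [simpl; lra|].
  rewrite cf_theta_rec.
  change (q (S (S i))) with (a (S i) * q (S i) + q i)%Z.
  rewrite plus_IZR, mult_IZR, <- IH. ring.
Qed.

Lemma cf_q_theta_le1 i : IZR (q (S i)) * theta (S i) <= 1.
Proof.
  pose proof (cf_q_theta_cross (S i)).
  destruct (cf_q_mono (S i)) as [[Hq0 Hqle] _].
  apply IZR_le in Hq0. apply IZR_le in Hqle.
  pose proof (cf_theta_pos (S i)). pose proof (cf_theta_pos (S (S i))).
  assert (0 <= IZR (q (S i)) * theta (S (S i))) by (apply Rmult_le_pos; lra).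
  assert (IZR (q (S i)) * theta (S i) <= IZR (q (S (S i))) * theta (S i))
    by (apply Rmult_le_compat_r; lra).
  lra.
Qed.

Lemma cf_q_growth m : (Z.of_nat (2 ^ m) <= q (S (2 * m)))%Z.
Proof.
  induction m as [|m IH]; [simpl; lia|].
  replace (S (2 * S m)) with (S (S (S (2 * m)))) by lia.
  change (q (S (S (S (2 * m))))) with
    (a (S (S (2 * m))) * q (S (S (2 * m))) + q (S (2 * m)))%Z.
  destruct (cf_q_mono (S (2 * m))) as [[_ Hle] _].
  assert (Ha : (1 <= a (S (S (2 * m))))%Z) by apply partial_quotient_ge1, cf_frac_nz.
  rewrite Nat.pow_succ_r', Nat2Z.inj_mul. nia.
Qed.

End ContinuedFraction.

Lemma sumR_Zdiv_shift q (m : Z) : (1 <= q)%nat ->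
  sumR (seq 0 q) (fun r => IZR ((m + Z.of_nat r) / Z.of_nat q)) = IZR m.
Proof.
  intros Hq.
  set (F := fun m => sumR (seq 0 q) (fun r => IZR ((m + Z.of_nat r) / Z.of_nat q))).
  assert (Hstep : forall m, F (Z.succ m) = F m + 1).
  { intros m'. unfold F. enough (Hd : sumR (seq 0 q) (fun r =>
        IZR ((Z.succ m' + Z.of_nat r) / Z.of_nat q) - IZR ((m' + Z.of_nat r) / Z.of_nat q)) = 1).
    { rewrite sumR_minus in Hd. lra. }
    set (h := fun k : nat => IZR ((m' + Z.of_nat k) / Z.of_nat q)).
    transitivity (sumR (seq 0 q) (fun r => h (S r) - h r)).
    { apply sumR_ext. intros r _. unfold h. rewrite Nat2Z.inj_succ. do 3 f_equal. lia. }
    rewrite sumR_telescope. unfold h. rewrite <- minus_IZR, Z.add_0_r.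
    replace (m' + Z.of_nat q)%Z with (m' + 1 * Z.of_nat q)%Z by ring.
    rewrite Z_div_plus_full by lia. f_equal. ring. }
  change (F m = IZR m).
  induction m using Z.peano_ind.
  - unfold F. rewrite (sumR_ext _ _ (fun _ => 0)).
    + rewrite sumR_const. lra.
    + intros r Hr. apply in_seq in Hr. rewrite Z.div_small; [reflexivity|lia].
  - rewrite Hstep, IHm, <- Z.add_1_r, plus_IZR. lra.
  - pose proof (Hstep (Z.pred m)) as Hp. rewrite Z.succ_pred, IHm in Hp.
    replace (IZR (Z.pred m)) with (IZR m - 1) by (rewrite <- Z.sub_1_r, minus_IZR; ring).
    lra.
Qed.

Lemma hermite_identity q x : (1 <= q)%nat ->
  sumR (seq 0 q) (fun r => IZR (Int_part (x + INR r / INR q))) = IZR (Int_part (INR q * x)).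
Proof.
  intros Hq. set (m := Int_part (INR q * x)).
  rewrite <- (sumR_Zdiv_shift q m Hq). apply sumR_ext. intros r _. f_equal.
  symmetry. apply Int_part_spec.
  assert (Hq0 : 0 < INR q) by (apply lt_0_INR; lia).
  set (d := ((m + Z.of_nat r) / Z.of_nat q)%Z).
  pose proof (Z_div_mod_eq_full (m + Z.of_nat r) (Z.of_nat q)).
  pose proof (Z.mod_pos_bound (m + Z.of_nat r) (Z.of_nat q)).
  assert (Hlo : IZR (Z.of_nat q * d) <= IZR (m + Z.of_nat r)) by (apply IZR_le; lia).
  assert (Hhi : IZR (m + Z.of_nat r + 1) <= IZR (Z.of_nat q * d + Z.of_nat q))
    by (apply IZR_le; lia).
  rewrite mult_IZR, plus_IZR, <- !INR_IZR_INZ in Hlo.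
  rewrite !plus_IZR, mult_IZR, <- !INR_IZR_INZ in Hhi.
  pose proof (Int_part_bounds (INR q * x)). fold m in H1.
  replace (x + INR r / INR q) with ((INR q * x + INR r) / INR q) by (field; lra).
  split.
  - apply Rmult_lt_reg_l with (INR q); auto. field_simplify; lra.
  - apply Rmult_le_reg_l with (INR q); auto. field_simplify; lra.
Qed.

Definition floor_sum (alpha c : R) (L : nat) : R :=
  sumR (seq 0 L) (fun j => IZR (Int_part (c + INR j * alpha))).

Definition bounded_remainder (alpha : R) (L : nat) (D : R) : Prop :=
  exists K, forall c, Rabs (floor_sum alpha c L - INR L * c - K) <= D.

Section BoundedRemainder.
Variable alpha : R.

Lemma floor_sum_add c L1 L2 :
  floor_sum alpha c (L1 + L2) = floor_sum alpha c L1 + floor_sum alpha (c + INR L1 * alpha) L2.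
Proof.
  unfold floor_sum. rewrite seq_app, sumR_app. f_equal.
  rewrite Nat.add_0_l, seq_shift_add, sumR_map. apply sumR_ext. intros j _.
  rewrite plus_INR. do 2 f_equal. ring.
Qed.

Lemma bounded_remainder_add L1 L2 D1 D2 :
  bounded_remainder alpha L1 D1 -> bounded_remainder alpha L2 D2 ->
  bounded_remainder alpha (L1 + L2) (D1 + D2).
Proof.
  intros [K1 H1] [K2 H2]. exists (K1 + K2 + INR L2 * INR L1 * alpha). intros c.
  specialize (H1 c). specialize (H2 (c + INR L1 * alpha)).
  rewrite floor_sum_add, plus_INR.
  match goal with |- Rabs ?e <= _ =>
    replace e with ((floor_sum alpha c L1 - INR L1 * c - K1)
      + (floor_sum alpha (c + INR L1 * alpha) L2 - INR L2 * (c + INR L1 * alpha) - K2)) by ring end.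
  eapply Rle_trans; [apply Rabs_triang|]. lra.
Qed.

Lemma bounded_remainder_weaken L D D' :
  bounded_remainder alpha L D -> D <= D' -> bounded_remainder alpha L D'.
Proof. intros [K H] Hd. exists K. intros c. specialize (H c). lra. Qed.

Lemma bounded_remainder_0 : bounded_remainder alpha 0 0.
Proof.
  exists 0. intros c. unfold floor_sum. simpl.
  replace (0 - 0 * c - 0) with 0 by ring. rewrite Rabs_R0. lra.
Qed.

Lemma bounded_remainder_mul q D b :
  bounded_remainder alpha q D -> bounded_remainder alpha (b * q) (INR b * D).
Proof.
  intros H. induction b as [|b IH].
  - simpl. rewrite Rmult_0_l. apply bounded_remainder_0.
  - simpl (S b * q)%nat. rewrite S_INR, Rmult_plus_distr_r, Rmult_1_l, Rplus_comm.
    apply bounded_remainder_add; auto.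
Qed.

End BoundedRemainder.

Lemma mul_mod_permutation q p : (1 <= q)%nat ->
  (forall j z : Z, (0 < j < Z.of_nat q)%Z -> (j * p)%Z <> (z * Z.of_nat q)%Z) ->
  Permutation (map (fun j => ((Z.of_nat j * p) mod Z.of_nat q)%Z) (seq 0 q))
              (map Z.of_nat (seq 0 q)).
Proof.
  intros Hq Hcop. apply NoDup_Permutation_bis.
  - apply NoDup_map_NoDup_ForallPairs; [|apply seq_NoDup].
    intros x y Hx Hy Hxy. apply in_seq in Hx. apply in_seq in Hy.
    pose proof (Z_div_mod_eq_full (Z.of_nat x * p) (Z.of_nat q)) as Ex.
    pose proof (Z_div_mod_eq_full (Z.of_nat y * p) (Z.of_nat q)) as Ey.
    set (dx := (Z.of_nat x * p / Z.of_nat q)%Z) in *.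
    set (dy := (Z.of_nat y * p / Z.of_nat q)%Z) in *.
    rewrite Hxy in Ex.
    destruct (lt_eq_lt_dec x y) as [[Hlt|Heq]|Hgt]; auto; exfalso.
    + apply (Hcop (Z.of_nat y - Z.of_nat x)%Z (dy - dx)%Z); [lia|nia].
    + apply (Hcop (Z.of_nat x - Z.of_nat y)%Z (dx - dy)%Z); [lia|nia].
  - rewrite !length_map. lia.
  - intros z Hz. apply in_map_iff in Hz. destruct Hz as [j [Hj _]].
    pose proof (Z.mod_pos_bound (Z.of_nat j * p) (Z.of_nat q)).
    apply in_map_iff. exists (Z.to_nat z). split; [lia|]. apply in_seq. lia.
Qed.

Lemma convergent_multiple_decomp alpha q p theta sg j :
  (1 <= q)%nat -> (j <= q)%nat -> 0 <= theta -> INR q * theta <= 1 -> (sg = 1 \/ sg = -1) ->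
  INR q * alpha - IZR p = sg * theta ->
  exists e, -1 <= e <= 1 /\
    INR j * alpha = (IZR ((Z.of_nat j * p) mod Z.of_nat q) + e) / INR q
                    + IZR ((Z.of_nat j * p) / Z.of_nat q).
Proof.
  intros Hq Hj Hth Hqth Hsg Happrox.
  assert (Hq0 : 0 < INR q) by (apply lt_0_INR; lia).
  exists (sg * INR j * theta). split.
  - assert (INR j <= INR q) by (apply le_INR; lia).
    pose proof (pos_INR j). destruct Hsg; subst; nra.
  - pose proof (Z_div_mod_eq_full (Z.of_nat j * p) (Z.of_nat q)) as Ediv.
    apply (f_equal IZR) in Ediv. rewrite plus_IZR, !mult_IZR, <- !INR_IZR_INZ in Ediv.
    apply Rmult_eq_reg_l with (INR q); [|lra].
    field_simplify; [|lra].
    replace (INR q * INR j * alpha) with (INR j * (INR q * alpha)) by ring.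
    replace (INR q * alpha) with (IZR p + sg * theta) by lra. nra.
Qed.

(* A good rational approximation p/q of alpha makes the points j alpha, j < q,
   a perturbation by at most 1/q of the points j p / q, which run through all
   residues r / q; Hermite's identity then evaluates the floor sum up to 1. *)
Lemma bounded_remainder_convergent alpha q p theta sg :
  (1 <= q)%nat -> 0 <= theta -> INR q * theta <= 1 -> (sg = 1 \/ sg = -1) ->
  INR q * alpha - IZR p = sg * theta ->
  (forall j z : Z, (0 < j < Z.of_nat q)%Z -> (j * p)%Z <> (z * Z.of_nat q)%Z) ->
  bounded_remainder alpha q 2.
Proof.
  intros Hq Hth Hqth Hsg Happrox Hcop.
  assert (Hq0 : 0 < INR q) by (apply lt_0_INR; lia).
  set (Zq := Z.of_nat q).
  exists (sumR (seq 0 q) (fun j => IZR ((Z.of_nat j * p) / Zq))). intros c.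
  set (res := fun j : nat => ((Z.of_nat j * p) mod Zq)%Z).
  set (F := fun (d : R) (z : Z) => IZR (Int_part (c + (IZR z + d) / INR q))).
  assert (Hsum : forall d,
    sumR (seq 0 q) (fun j => F d (res j)) = IZR (Int_part (INR q * c + d))).
  { intros d. rewrite <- (sumR_map _ res (F d)).
    rewrite (sumR_perm _ _ _ (mul_mod_permutation q p Hq Hcop)), sumR_map.
    replace (INR q * c + d) with (INR q * (c + d / INR q)) by (field; lra).
    rewrite <- hermite_identity by auto. apply sumR_ext. intros r _. unfold F.
    rewrite <- INR_IZR_INZ. do 2 f_equal. field. lra. }
  assert (Hterm : forall j, In j (seq 0 q) ->
     F (-1) (res j) <= IZR (Int_part (c + INR j * alpha)) - IZR ((Z.of_nat j * p) / Zq)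
     <= F 1 (res j)).
  { intros j Hj. apply in_seq in Hj.
    destruct (convergent_multiple_decomp alpha q p theta sg j) as [e [He Hja]]; auto; [lia|].
    rewrite Hja, <- Rplus_assoc, Int_part_plus_IZR, plus_IZR.
    assert (Hmono : forall u v, u <= v -> F u (res j) <= F v (res j)).
    { intros u v Huv. apply IZR_le, Int_part_le_compat, Rplus_le_compat_l.
      unfold Rdiv. apply Rmult_le_compat_r; [left; apply Rinv_0_lt_compat|]; lra. }
    pose proof (Hmono _ _ (proj1 He)). pose proof (Hmono _ _ (proj2 He)).
    unfold F, res, Zq in *. lra. }
  assert (Hlo := sumR_le _ _ _ (fun j Hj => proj1 (Hterm j Hj))).
  assert (Hhi := sumR_le _ _ _ (fun j Hj => proj2 (Hterm j Hj))).
  rewrite sumR_minus, Hsum in Hlo, Hhi. fold (floor_sum alpha c q) in Hlo, Hhi.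
  rewrite (Int_part_plus_IZR _ 1) in Hhi.
  replace (INR q * c + -1) with (INR q * c + IZR (-1)) in Hlo by (simpl; ring).
  rewrite Int_part_plus_IZR in Hlo. rewrite plus_IZR in Hlo, Hhi.
  pose proof (Int_part_bounds (INR q * c)). apply Rabs_le. simpl IZR in *. lra.
Qed.

Definition pq_sum (alpha : R) (m : nat) : R :=
  fold_right Rplus 0 (map (fun k => IZR (partial_quotient alpha k)) (seq 1 m)).

Lemma pq_sum_S alpha m : pq_sum alpha (S m) = pq_sum alpha m + IZR (partial_quotient alpha (S m)).
Proof.
  unfold pq_sum. rewrite seq_S, map_app, fold_right_app. simpl.
  replace (1 + m)%nat with (S m) by lia.
  induction (map _ (seq 1 m)) as [|x l IH]; simpl; [lra|]. rewrite IH. lra.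
Qed.

Section Ostrowski.
Variable alpha : R.
Hypothesis cf_frac_nz : forall k, cf_frac alpha k <> 0.

Lemma bounded_remainder_cf_q i : bounded_remainder alpha (Z.to_nat (cf_q alpha (S i))) 2.
Proof.
  destruct (cf_q_mono alpha cf_frac_nz i) as [_ Hq].
  assert (Hq_INR : INR (Z.to_nat (cf_q alpha (S i))) = IZR (cf_q alpha (S i))).
  { rewrite INR_IZR_INZ. f_equal. lia. }
  apply (bounded_remainder_convergent alpha _ (cf_p alpha (S i)) (cf_theta alpha (S i))
           ((-1) ^ S (S i))).
  - lia.
  - left. apply cf_theta_pos; auto.
  - rewrite Hq_INR. apply cf_q_theta_le1; auto.
  - destruct (Nat.Even_or_Odd (S (S i))) as [[m Hm]|[m Hm]]; rewrite Hm;
      [left; apply pow_1_even | right; rewrite Nat.add_1_r; apply pow_1_odd].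
  - rewrite Hq_INR. apply (cf_error_identity_holds alpha cf_frac_nz (S i)).
  - intros j z Hj. rewrite Z2Nat.id in * by lia. apply cf_q_coprime. auto.
Qed.

(* Ostrowski expansion: L < q_{k+1} splits as b copies of q_k plus a remainder
   below q_k, with b <= a_{k+1}. *)
Lemma bounded_remainder_ostrowski k L :
  (Z.of_nat L < cf_q alpha (S k))%Z -> bounded_remainder alpha L (2 * pq_sum alpha k).
Proof.
  revert L. induction k as [|k IH]; intros L HL.
  - simpl in HL. replace L with 0%nat by lia. unfold pq_sum. simpl.
    rewrite Rmult_0_r. apply bounded_remainder_0.
  - destruct (cf_q_mono alpha cf_frac_nz k) as [[_ Hle] Hq1].
    set (qk := Z.to_nat (cf_q alpha (S k))).
    assert (Hqk : Z.of_nat qk = cf_q alpha (S k)) by (unfold qk; lia).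
    pose proof (Nat.div_mod_eq L qk) as Hdiv.
    pose proof (Nat.mod_upper_bound L qk ltac:(lia)) as Hmod.
    set (b := (L / qk)%nat) in *. set (r := (L mod qk)%nat) in *.
    assert (Hb : (Z.of_nat b <= partial_quotient alpha (S k))%Z).
    { change (cf_q alpha (S (S k))) with
        (partial_quotient alpha (S k) * cf_q alpha (S k) + cf_q alpha k)%Z in HL.
      assert (Z.of_nat L = Z.of_nat qk * Z.of_nat b + Z.of_nat r)%Z by lia.
      nia. }
    replace L with (b * qk + r)%nat by lia.
    eapply bounded_remainder_weaken.
    + apply bounded_remainder_add.
      * apply bounded_remainder_mul, bounded_remainder_cf_q.
      * apply IH. lia.
    + rewrite pq_sum_S, INR_IZR_INZ. apply IZR_le in Hb. lra.
Qed.

End Ostrowski.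

Lemma b2R_frac_lt w y (f : bool) : 0 <= y <= 1 -> (f = true <-> frac w < y) ->
  b2R f = IZR (Int_part w) - IZR (Int_part (w - y)).
Proof.
  intros Hy Hf. unfold frac, frac_part in Hf. pose proof (Int_part_bounds w).
  destruct f; unfold b2R.
  - replace (Int_part (w - y)) with (Int_part w - 1)%Z.
    + rewrite minus_IZR. simpl. lra.
    + apply Int_part_spec. rewrite minus_IZR. assert (w - IZR (Int_part w) < y) by now apply Hf.
      simpl. lra.
  - replace (Int_part (w - y)) with (Int_part w).
    + lra.
    + apply Int_part_spec. assert (~ (w - IZR (Int_part w) < y)) by (rewrite <- Hf; discriminate).
      lra.
Qed.

(* 1[{alpha s} < y] = floor (alpha s) - floor (alpha s - y), so the count is the
   difference of two floor sums with offsets alpha and alpha - y. *)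
Lemma count_frac_lt_bound alpha k D y (f : nat -> bool) :
  bounded_remainder alpha k D -> 0 <= y <= 1 ->
  (forall s, f s = true <-> frac (alpha * INR s) < y) ->
  Rabs (sumR (seq 1 k) (fun s => b2R (f s)) - INR k * y) <= 2 * D.
Proof.
  intros [K HK] Hy Hf.
  rewrite (sumR_ext _ _
    (fun s => IZR (Int_part (alpha * INR s)) - IZR (Int_part (alpha * INR s - y)))).
  2:{ intros s _. apply b2R_frac_lt; auto. }
  rewrite <- seq_shift, sumR_map, sumR_minus.
  replace (sumR (seq 0 k) (fun x => IZR (Int_part (alpha * INR (S x)))))
    with (floor_sum alpha alpha k).
  2:{ unfold floor_sum. apply sumR_ext. intros j _. rewrite S_INR. do 2 f_equal. ring. }
  replace (sumR (seq 0 k) (fun x => IZR (Int_part (alpha * INR (S x) - y))))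
    with (floor_sum alpha (alpha - y) k).
  2:{ unfold floor_sum. apply sumR_ext. intros j _. rewrite S_INR. do 2 f_equal. ring. }
  pose proof (HK alpha). pose proof (HK (alpha - y)).
  match goal with |- Rabs ?e <= _ =>
    replace e with ((floor_sum alpha alpha k - INR k * alpha - K)
      - (floor_sum alpha (alpha - y) k - INR k * (alpha - y) - K)) by ring end.
  eapply Rle_trans; [apply Rabs_triang|]. rewrite Rabs_Ropp. lra.
Qed.

Lemma count_frac_lt_log alpha n k y (f : nat -> bool) :
  (forall j, cf_frac alpha j <> 0) -> (1 <= n)%nat -> (k <= n)%nat -> 0 <= y <= 1 ->
  (forall s, f s = true <-> frac (alpha * INR s) < y) ->
  Rabs (sumR (seq 1 k) (fun s => b2R (f s)) - INR k * y)
  <= 4 * pq_sum alpha (2 * S (Nat.log2 n)).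
Proof.
  intros Hfr Hn Hk Hy Hf.
  replace (4 * pq_sum alpha (2 * S (Nat.log2 n)))
    with (2 * (2 * pq_sum alpha (2 * S (Nat.log2 n)))) by ring.
  apply (count_frac_lt_bound alpha); auto.
  apply bounded_remainder_ostrowski; auto.
  pose proof (cf_q_growth alpha Hfr (S (Nat.log2 n))).
  pose proof (Nat.log2_spec n ltac:(lia)). lia.
Qed.

Section FilterLength.
Context {A : Type}.

Lemma filter_length_le_impl (P Q : A -> bool) l :
  (forall x, In x l -> P x = true -> Q x = true) ->
  (length (filter P l) <= length (filter Q l))%nat.
Proof.
  induction l as [|x l IH]; simpl; intros H; auto.
  destruct (P x) eqn:Ex.
  - rewrite (H x (or_introl eq_refl) Ex). simpl. apply le_n_S, IH; auto.
  - destruct (Q x); simpl; [apply le_S|]; apply IH; auto.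
Qed.

Lemma filter_length_lt_impl (P Q : A -> bool) l :
  (forall x, In x l -> P x = true -> Q x = true) ->
  (exists x, In x l /\ P x = false /\ Q x = true) ->
  (length (filter P l) < length (filter Q l))%nat.
Proof.
  induction l as [|a l IH]; simpl; intros H [x [Hx [Hp Hq]]]; [contradiction|].
  destruct Hx as [<-|Hx].
  - rewrite Hp, Hq. simpl. apply le_n_S, filter_length_le_impl; auto.
  - assert (length (filter P l) < length (filter Q l))%nat by (apply IH; eauto).
    destruct (P a) eqn:Ea.
    + rewrite (H a (or_introl eq_refl) Ea). simpl. lia.
    + destruct (Q a); simpl; lia.
Qed.

End FilterLength.

Lemma frac_mul_inj alpha : irrational alpha -> forall s t : nat, s <> t ->
  frac (alpha * INR s) <> frac (alpha * INR t).
Proof.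
  intros Hirr s t Hst Heq. unfold frac, frac_part in Heq.
  apply (Hirr (Int_part (alpha * INR s) - Int_part (alpha * INR t))%Z
              (Z.of_nat s - Z.of_nat t)%Z); [lia|].
  assert (IZR (Z.of_nat s - Z.of_nat t) <> 0) by (apply not_0_IZR; lia).
  rewrite !minus_IZR, <- !INR_IZR_INZ in *.
  field_simplify_eq; auto. lra.
Qed.

Section SosPermutation.
Variables (alpha : R) (n : nat).
Hypothesis alpha_irr : irrational alpha.

Local Notation beta := (sos_perm alpha n).

Lemma sos_perm_range s : (1 <= s <= n)%nat -> (1 <= beta s <= n)%nat.
Proof.
  intros Hs. unfold sos_perm, cardn. split.
  - assert (Hin : In s (filter (fun s' => if Rle_dec (frac (alpha * INR s')) (frac (alpha * INR s))
                                          then true else false) (seq 1 n))).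
    { apply filter_In. split; [apply in_seq; lia|]. destruct Rle_dec; auto. lra. }
    destruct (filter _ _); [contradiction|]. simpl. lia.
  - eapply Nat.le_trans; [apply filter_length_le|]. rewrite length_seq. lia.
Qed.

Lemma sos_perm_le s t : frac (alpha * INR t) <= frac (alpha * INR s) -> (beta t <= beta s)%nat.
Proof.
  intros Hle. apply filter_length_le_impl.
  intros x _. destruct Rle_dec; destruct Rle_dec; auto; lra.
Qed.

Lemma sos_perm_lt s t : (1 <= t <= n)%nat ->
  frac (alpha * INR s) < frac (alpha * INR t) -> (beta s < beta t)%nat.
Proof.
  intros Ht Hlt. apply filter_length_lt_impl.
  - intros x _. destruct Rle_dec; destruct Rle_dec; auto; lra.
  - exists t. split; [apply in_seq; lia|].
    destruct Rle_dec; [lra|]. destruct Rle_dec; auto. lra.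
Qed.

Lemma sos_perm_inj s t : (1 <= s <= n)%nat -> (1 <= t <= n)%nat -> beta s = beta t -> s = t.
Proof.
  intros Hs Ht Heq. destruct (Nat.eq_dec s t) as [|Hst]; auto. exfalso.
  pose proof (frac_mul_inj alpha alpha_irr s t Hst).
  destruct (Rlt_le_dec (frac (alpha * INR s)) (frac (alpha * INR t))).
  - pose proof (sos_perm_lt s t Ht r). lia.
  - pose proof (sos_perm_lt t s Hs ltac:(lra)). lia.
Qed.

Lemma sos_perm_permutation : Permutation (map beta (seq 1 n)) (seq 1 n).
Proof.
  apply NoDup_Permutation_bis.
  - apply NoDup_map_NoDup_ForallPairs; [|apply seq_NoDup].
    intros x y Hx Hy. apply in_seq in Hx. apply in_seq in Hy. apply sos_perm_inj; lia.
  - rewrite length_map. lia.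
  - intros z Hz. apply in_map_iff in Hz. destruct Hz as [s [<- Hs]]. apply in_seq in Hs.
    apply in_seq. pose proof (sos_perm_range s). lia.
Qed.

Lemma sos_perm_threshold k : (1 <= n)%nat -> (k <= n)%nat ->
  exists y, 0 <= y <= 1 /\ forall s, (1 <= s <= n)%nat ->
    (Nat.leb (beta s) k = true <-> frac (alpha * INR s) < y).
Proof.
  intros Hn Hk. destruct (Nat.eq_dec k n) as [->|Hkn].
  - exists 1. split; [lra|]. intros s Hs. pose proof (sos_perm_range s Hs).
    pose proof (frac_bounds (alpha * INR s)). rewrite Nat.leb_le. split; intros; [lra|lia].
  - assert (Hin : In (S k) (map beta (seq 1 n))).
    { eapply Permutation_in; [symmetry; apply sos_perm_permutation|]. apply in_seq. lia. }
    apply in_map_iff in Hin. destruct Hin as [t [Ht Hin]]. apply in_seq in Hin.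
    exists (frac (alpha * INR t)). pose proof (frac_bounds (alpha * INR t)). split; [lra|].
    intros s Hs. rewrite Nat.leb_le. split.
    + intros Hle. destruct (Rlt_le_dec (frac (alpha * INR s)) (frac (alpha * INR t))); auto.
      pose proof (sos_perm_le s t r). lia.
    + intros Hlt. pose proof (sos_perm_lt s t ltac:(lia) Hlt). lia.
Qed.

End SosPermutation.

Lemma in_interval_mod n a l t : (1 <= n)%nat ->
  in_interval n a l t = Nat.ltb ((t + (n - a mod n)) mod n) l.
Proof.
  intros Hn. assert (Hn0 : n <> 0%nat) by lia.
  pose proof (Nat.mod_upper_bound a n Hn0).
  pose proof (Nat.div_mod_eq a n).
  apply eq_true_iff_eq. rewrite Nat.ltb_lt. unfold in_interval. rewrite existsb_exists. split.
  - intros [i [Hi He]]. apply in_seq in Hi. apply Nat.eqb_eq in He.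
    rewrite <- Nat.Div0.add_mod_idemp_l, <- He, Nat.Div0.add_mod_idemp_l.
    replace (a + i + (n - a mod n))%nat with (i + (1 + a / n) * n)%nat by nia.
    rewrite Nat.Div0.mod_add. pose proof (Nat.Div0.mod_le i n). lia.
  - intros Hd. exists ((t + (n - a mod n)) mod n). split; [apply in_seq; lia|].
    apply Nat.eqb_eq. rewrite Nat.Div0.add_mod_idemp_r.
    replace (a + (t + (n - a mod n)))%nat with (t + (1 + a / n) * n)%nat by nia.
    apply Nat.Div0.mod_add.
Qed.

Lemma mod_cases_le_double n x : (1 <= n)%nat -> (x <= 2 * n)%nat ->
  (x < n /\ x mod n = x)%nat \/ (n <= x < 2 * n /\ x mod n = x - n)%nat \/
  (x = 2 * n /\ x mod n = 0)%nat.
Proof.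
  intros Hn Hx. destruct (Nat.lt_ge_cases x n).
  - left. split; auto. apply Nat.mod_small; auto.
  - destruct (Nat.lt_ge_cases x (2 * n)).
    + right; left. split; [lia|]. replace x with ((x - n) + 1 * n)%nat at 1 by lia.
      rewrite Nat.Div0.mod_add. apply Nat.mod_small. lia.
    + right; right. split; [lia|]. replace x with (0 + 2 * n)%nat by lia.
      rewrite Nat.Div0.mod_add. apply Nat.Div0.mod_0_l.
Qed.

Definition prefix (k t : nat) : R := b2R (Nat.leb t k).

Lemma sumR_prefix n k : (k <= n)%nat -> sumR (seq 1 n) (prefix k) = INR k.
Proof.
  intros Hk. rewrite (seq_split_at n k Hk), sumR_app.
  rewrite (sumR_ext (seq 1 k) _ (fun _ => 1)), (sumR_ext (seq (1 + k) (n - k)) _ (fun _ => 0)).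
  - rewrite !sumR_const, length_seq. lra.
  - intros t Ht. apply in_seq in Ht. unfold prefix, b2R.
    destruct (Nat.leb_spec t k); [lia|reflexivity].
  - intros t Ht. apply in_seq in Ht. unfold prefix, b2R.
    destruct (Nat.leb_spec t k); [reflexivity|lia].
Qed.

Local Ltac solve_prefix_cases Hoff :=
  intros t Ht; destruct (Hoff t Ht) as [d [-> Hd]]; unfold prefix, b2R;
  destruct Hd as [[? ->]|[[? ->]|[? ->]]];
  repeat match goal with |- context [Nat.ltb ?x ?y] => destruct (Nat.ltb_spec x y) end;
  repeat match goal with |- context [Nat.leb ?x ?y] => destruct (Nat.leb_spec x y) end;
  lra || lia.

(* An arc of Z_n, read on the representatives 1..n, is a prefix, a difference of
   two prefixes, or (when it wraps around) a prefix plus a suffix. *)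
Lemma interval_prefix_decomposition n a l : (1 <= n)%nat ->
  exists k1 k2 k3, (k1 <= n)%nat /\ (k2 <= n)%nat /\ (k3 <= n)%nat /\
    forall t, (1 <= t <= n)%nat ->
      b2R (in_interval n a l t) = prefix k1 t + prefix k2 t - prefix k3 t.
Proof.
  intros Hn. pose proof (Nat.mod_upper_bound a n ltac:(lia)).
  set (a0 := (a mod n)%nat) in *.
  assert (Hoff : forall t, (1 <= t <= n)%nat -> exists d, in_interval n a l t = Nat.ltb d l /\
     ((t + (n - a0) < n /\ d = t + (n - a0)) \/
      (n <= t + (n - a0) < 2 * n /\ d = t + (n - a0) - n) \/
      (t + (n - a0) = 2 * n /\ d = 0))%nat).
  { intros t Ht. exists ((t + (n - a0)) mod n). split; [apply in_interval_mod; auto|].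
    destruct (mod_cases_le_double n (t + (n - a0)) Hn ltac:(lia)) as [[? ?]|[[? ?]|[? ?]]];
      auto. }
  destruct (Nat.eq_dec l 0).
  { exists 0%nat, 0%nat, 0%nat. do 3 (split; [lia|]). solve_prefix_cases Hoff. }
  destruct (le_lt_dec n l).
  { exists n, 0%nat, 0%nat. do 3 (split; [lia|]). solve_prefix_cases Hoff. }
  destruct (Nat.eq_dec a0 0).
  { exists (l - 1)%nat, n, (n - 1)%nat. do 3 (split; [lia|]). solve_prefix_cases Hoff. }
  destruct (le_lt_dec (a0 + l) n).
  { exists (a0 + l - 1)%nat, 0%nat, (a0 - 1)%nat. do 3 (split; [lia|]). solve_prefix_cases Hoff. }
  exists n, (a0 + l - 1 - n)%nat, (a0 - 1)%nat. do 3 (split; [lia|]). solve_prefix_cases Hoff.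
Qed.

(* For a permutation sigma of [n], D_J(sigma(I)) is |perm_dev n sigma 1_I 1_J|,
   a bilinear expression in the two indicators. *)
Definition perm_dev (n : nat) (sigma : nat -> nat) (u v : nat -> R) : R :=
  sumR (seq 1 n) (fun s => u s * v (sigma s))
  - sumR (seq 1 n) u * sumR (seq 1 n) v / INR n.

Section PermutationDiscrepancy.
Variables (n : nat) (sigma : nat -> nat).
Hypothesis sigma_perm : Permutation (map sigma (seq 1 n)) (seq 1 n).
Hypothesis sigma_inj : forall s t, (1 <= s <= n)%nat -> (1 <= t <= n)%nat ->
  sigma s = sigma t -> s = t.

Lemma perm_range s : (1 <= s <= n)%nat -> (1 <= sigma s <= n)%nat.
Proof.
  intros Hs. enough (Hin : In (sigma s) (seq 1 n)) by (apply in_seq in Hin; lia).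
  eapply Permutation_in; [exact sigma_perm|]. apply in_map, in_seq. lia.
Qed.

Lemma sumR_perm_comp F : sumR (seq 1 n) F = sumR (seq 1 n) (fun s => F (sigma s)).
Proof. rewrite <- (sumR_map _ sigma). apply sumR_perm. symmetry. exact sigma_perm. Qed.

Lemma in_image_perm a l s : (1 <= s <= n)%nat ->
  in_image n sigma a l (sigma s) = in_interval n a l s.
Proof.
  intros Hs. unfold in_image. apply eq_true_iff_eq. rewrite existsb_exists. split.
  - intros [s' [Hs' Hb]]. apply andb_true_iff in Hb. destruct Hb as [Hi He].
    apply Nat.eqb_eq in He. apply in_seq in Hs'. apply sigma_inj in He; [subst; auto|lia|lia].
  - intros Hi. exists s. split; [apply in_seq; lia|]. rewrite Hi, Nat.eqb_refl. auto.
Qed.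

Lemma discr_eq_perm_dev a l b m :
  discr n (in_image n sigma a l) (in_interval n b m)
  = Rabs (perm_dev n sigma (fun s => b2R (in_interval n a l s))
                           (fun t => b2R (in_interval n b m t))).
Proof.
  unfold discr, perm_dev. rewrite !cardn_sumR.
  rewrite (sumR_perm_comp (fun t => b2R (in_image n sigma a l t && in_interval n b m t))).
  rewrite (sumR_perm_comp (fun t => b2R (in_image n sigma a l t))).
  rewrite (sumR_ext _ _
             (fun s => b2R (in_interval n a l s) * b2R (in_interval n b m (sigma s)))),
    (sumR_ext _ (fun s => b2R (in_image n sigma a l (sigma s)))
                (fun s => b2R (in_interval n a l s)));
    [reflexivity | |]; intros s Hs; apply in_seq in Hs;
    rewrite ?b2R_andb, in_image_perm by lia; reflexivity.
Qed.

Lemma perm_dev_ext u u' v v' :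
  (forall s, (1 <= s <= n)%nat -> u s = u' s) -> (forall t, (1 <= t <= n)%nat -> v t = v' t) ->
  perm_dev n sigma u v = perm_dev n sigma u' v'.
Proof.
  intros Hu Hv. unfold perm_dev.
  rewrite (sumR_ext _ u u'), (sumR_ext _ v v'),
    (sumR_ext _ (fun s => u s * v (sigma s)) (fun s => u' s * v' (sigma s))); auto;
    intros s Hs; apply in_seq in Hs; rewrite ?Hu, ?Hv; auto; try lia.
  apply perm_range. lia.
Qed.

Lemma perm_dev_combl u1 u2 u3 v :
  perm_dev n sigma (fun s => u1 s + u2 s - u3 s) v
  = perm_dev n sigma u1 v + perm_dev n sigma u2 v - perm_dev n sigma u3 v.
Proof.
  unfold perm_dev.
  rewrite (sumR_ext _ _ (fun s => u1 s * v (sigma s) + u2 s * v (sigma s)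
                                  - u3 s * v (sigma s))) by (intros; ring).
  rewrite !sumR_minus, !sumR_plus. unfold Rdiv. ring.
Qed.

Lemma perm_dev_combr u v1 v2 v3 :
  perm_dev n sigma u (fun t => v1 t + v2 t - v3 t)
  = perm_dev n sigma u v1 + perm_dev n sigma u v2 - perm_dev n sigma u v3.
Proof.
  unfold perm_dev.
  rewrite (sumR_ext _ _ (fun s => u s * v1 (sigma s) + u s * v2 (sigma s)
                                  - u s * v3 (sigma s))) by (intros; ring).
  rewrite !sumR_minus, !sumR_plus. unfold Rdiv. ring.
Qed.

Lemma discr_le_prefix_dev E a l b m : (1 <= n)%nat ->
  (forall k j, (k <= n)%nat -> (j <= n)%nat ->
     Rabs (perm_dev n sigma (prefix k) (prefix j)) <= E) ->
  discr n (in_image n sigma a l) (in_interval n b m) <= 9 * E.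
Proof.
  intros Hn HE. rewrite discr_eq_perm_dev.
  destruct (interval_prefix_decomposition n a l Hn) as [k1 [k2 [k3 [Hk1 [Hk2 [Hk3 HI]]]]]].
  destruct (interval_prefix_decomposition n b m Hn) as [j1 [j2 [j3 [Hj1 [Hj2 [Hj3 HJ]]]]]].
  rewrite (perm_dev_ext _ (fun s => prefix k1 s + prefix k2 s - prefix k3 s)
                         _ (fun t => prefix j1 t + prefix j2 t - prefix j3 t)) by auto.
  rewrite perm_dev_combl, !perm_dev_combr.
  pose proof (HE k1 j1 Hk1 Hj1). pose proof (HE k1 j2 Hk1 Hj2). pose proof (HE k1 j3 Hk1 Hj3).
  pose proof (HE k2 j1 Hk2 Hj1). pose proof (HE k2 j2 Hk2 Hj2). pose proof (HE k2 j3 Hk2 Hj3).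
  pose proof (HE k3 j1 Hk3 Hj1). pose proof (HE k3 j2 Hk3 Hj2). pose proof (HE k3 j3 Hk3 Hj3).
  repeat match goal with H : Rabs _ <= E |- _ => apply Rabs_le_inv in H end.
  apply Rabs_le. lra.
Qed.

End PermutationDiscrepancy.

Lemma Rabs_count_ratio_le Sk k j n y E : 0 < n -> 0 <= k <= n ->
  Rabs (Sk - k * y) <= E -> Rabs (j - n * y) <= E -> Rabs (Sk - k * j / n) <= 2 * E.
Proof.
  intros Hn Hk HSk Hj.
  assert (Hkn : 0 <= k / n <= 1).
  { split; [apply Rmult_le_pos; [lra | left; apply Rinv_0_lt_compat; lra]|].
    apply Rmult_le_reg_r with n; auto. field_simplify; lra. }
  replace (Sk - k * j / n) with ((Sk - k * y) + (k / n) * (n * y - j)) by (field; lra).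
  rewrite Rabs_minus_sym in Hj.
  eapply Rle_trans; [apply Rabs_triang|]. rewrite Rabs_mult, (Rabs_pos_eq (k / n)) by lra.
  assert (k / n * Rabs (n * y - j) <= 1 * E)
    by (apply Rmult_le_compat; [lra | apply Rabs_pos | lra | exact Hj]).
  lra.
Qed.

Section SosDiscrepancy.
Variables (alpha : R) (n : nat).
Hypothesis alpha_irr : irrational alpha.
Hypothesis n_pos : (1 <= n)%nat.

Local Notation beta := (sos_perm alpha n).
Local Notation E := (4 * pq_sum alpha (2 * S (Nat.log2 n))).

(* With y the threshold of beta^{-1}([1..j]), both sums below count points
   {alpha s} < y among the first k, resp. n, multiples of alpha. *)
Lemma sos_perm_prefix_dev k j : (k <= n)%nat -> (j <= n)%nat ->
  Rabs (perm_dev n beta (prefix k) (prefix j)) <= 2 * E.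
Proof.
  intros Hk Hj. pose proof (irrational_cf_frac_neq0 alpha alpha_irr) as Hfr.
  destruct (sos_perm_threshold alpha n alpha_irr j n_pos Hj) as [y [Hy Hth]].
  set (f := fun s : nat => if Rlt_dec (frac (alpha * INR s)) y then true else false).
  assert (Hf : forall s, f s = true <-> frac (alpha * INR s) < y).
  { intros s. unfold f. destruct Rlt_dec; split; intros; auto; try discriminate; contradiction. }
  assert (Hbeta : forall s, (1 <= s <= n)%nat -> prefix j (beta s) = b2R (f s)).
  { intros s Hs. unfold prefix. f_equal. apply eq_true_iff_eq. rewrite Hth, Hf by auto. tauto. }
  assert (Hcount_k := count_frac_lt_log alpha n k y f Hfr n_pos Hk Hy Hf).
  assert (Hcount_n := count_frac_lt_log alpha n n y f Hfr n_pos (le_n n) Hy Hf).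
  assert (Hcross : sumR (seq 1 n) (fun s => prefix k s * prefix j (beta s))
                   = sumR (seq 1 k) (fun s => b2R (f s))).
  { rewrite (seq_split_at n k Hk), sumR_app.
    rewrite (sumR_ext (seq (1 + k) (n - k)) _ (fun _ => 0)), sumR_const, Rmult_0_r, Rplus_0_r.
    - apply sumR_ext. intros s Hs. apply in_seq in Hs. rewrite Hbeta by lia.
      unfold prefix, b2R at 1. destruct (Nat.leb_spec s k); [ring|lia].
    - intros s Hs. apply in_seq in Hs. unfold prefix, b2R at 1.
      destruct (Nat.leb_spec s k); [lia|ring]. }
  assert (Htotal : sumR (seq 1 n) (fun s => b2R (f s)) = INR j).
  { rewrite <- (sumR_prefix n j Hj).
    rewrite (sumR_perm_comp n beta (sos_perm_permutation alpha n alpha_irr) (prefix j)).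
    apply sumR_ext. intros s Hs. apply in_seq in Hs. rewrite Hbeta by lia. reflexivity. }
  unfold perm_dev. rewrite Hcross, !sumR_prefix by auto. rewrite Htotal in Hcount_n.
  apply Rabs_count_ratio_le with y; auto.
  - apply lt_0_INR. lia.
  - split; [apply pos_INR | apply le_INR; lia].
Qed.

Lemma sos_perm_disc_le : disc_le n beta (18 * E).
Proof.
  intros a l b m. replace (18 * E) with (9 * (2 * E)) by ring.
  apply discr_le_prefix_dev; auto using sos_perm_prefix_dev.
  - exact (sos_perm_permutation alpha n alpha_irr).
  - exact (sos_perm_inj alpha n alpha_irr).
Qed.

End SosDiscrepancy.

Lemma log2_le_ln n : (1 <= n)%nat -> INR (Nat.log2 n) * ln 2 <= ln (INR n).
Proof.
  intros Hn. rewrite <- ln_pow by lra.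
  pose proof (Nat.log2_spec n ltac:(lia)) as [Hlo _].
  apply le_INR in Hlo. rewrite pow_INR in Hlo. replace (INR 2) with 2 in Hlo by (simpl; ring).
  destruct Hlo as [Hlt|Heq]; [left; apply ln_increasing; auto; apply pow_lt; lra|].
  rewrite Heq. lra.
Qed.

Lemma pq_sum_log2_le alpha B n : 0 <= B -> (2 <= n)%nat ->
  (forall m, (1 <= m)%nat -> pq_sum alpha m <= B * INR m) ->
  pq_sum alpha (2 * S (Nat.log2 n)) <= 4 * B / ln 2 * ln (INR n).
Proof.
  intros HB0 Hn HB.
  assert (Hln2 : 0 < ln 2) by (rewrite <- ln_1; apply ln_increasing; lra).
  assert (HL : (1 <= Nat.log2 n)%nat).
  { replace 1%nat with (Nat.log2 2) by reflexivity. apply Nat.log2_le_mono. lia. }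
  apply le_INR in HL. change (INR 1) with 1 in HL.
  pose proof (log2_le_ln n ltac:(lia)) as Hlog.
  eapply Rle_trans; [apply HB; lia|].
  replace (INR (2 * S (Nat.log2 n))) with (2 * (INR (Nat.log2 n) + 1))
    by (rewrite mult_INR, !S_INR; simpl; ring).
  assert (B * (INR (Nat.log2 n) * ln 2) <= B * ln (INR n)) by (apply Rmult_le_compat_l; lra).
  assert (0 <= B * ln 2 * (INR (Nat.log2 n) - 1))
    by (apply Rmult_le_pos; [apply Rmult_le_pos|]; lra).
  apply Rmult_le_reg_r with (ln 2); auto. field_simplify; lra.
Qed.

Theorem mainTheorem13 (alpha : R) :
  irrational alpha -> pq_bounded_in_average alpha ->
  exists (C : R) (N : nat), forall n : nat, (N <= n)%nat ->
    disc_le n (sos_perm alpha n) (C * ln (INR n)).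
Proof.
  intros Hirr [B HB].
  assert (HB0 : 0 <= B).
  { pose proof (HB 1%nat (le_n 1)) as H1. simpl in H1.
    pose proof (partial_quotient_ge1 alpha 0 (irrational_cf_frac_neq0 alpha Hirr 0)) as Ha.
    apply IZR_le in Ha. lra. }
  exists (18 * (4 * (4 * B / ln 2))), 2%nat. intros n Hn a l b m.
  eapply Rle_trans; [apply sos_perm_disc_le; auto; lia|].
  pose proof (pq_sum_log2_le alpha B n HB0 Hn HB). lra.
Qed.
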